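(* Let $\mathbb{X}=(X,\tau_{\mathbb{X}})$ be a $T_0$ topological space and $\Omega_0$ a viable base of $\mathbb{X}$. Then the spectral compactification $\widehat{\mathbb{X}}_{\Omega_0}$ is a core-compact space, and the map $\iota:X\to\widehat{X}$, $\iota(x)=\{I\in\mathrm{Idl}(\Omega_0): x\in\bigcup I\}$, is a dense topological embedding (continuous, injective, relatively open, with dense image). That is, $\widehat{\mathbb{X}}_{\Omega_0}$ is a core-compactification of $\mathbb{X}$.
   Context: A viable base of $\mathbb{X}$ is a family $\Omega_0\subseteq\tau_{\mathbb{X}}$ closed under finite unions and finite intersections (so $\emptyset,X\in\Omega_0$) which is a base of $\tau_{\mathbb{X}}$. $\mathrm{Idl}(\Omega_0)$ is the set of ideals (nonempty, downward closed, directed subsets) of $(\Omega_0,\subseteq)$, ordered by inclusion; it is a complete lattice. A completely prime filter of a complete lattice $L$ is a nonempty upward closed $F\subseteq L$ closed under binary meets such that whenever $\bigvee A\in F$ for $A\subseteq L$ then $A\cap F\neq\emptyset$. $\widehat{\mathbb{X}}_{\Omega_0}$ is the set $\widehat{X}$ of completely prime filters of $\mathrm{Idl}(\Omega_0)$ with the (hull-kernel) topology whose open sets are exactly $\mathcal{O}_I=\{y\in\widehat{X}: I\in y\}$, $I\in\mathrm{Idl}(\Omega_0)$. A space is core-compact if its lattice of open sets under inclusion is a continuous lattice. A core-compactification of $\mathbb{X}$ is a core-compact space into which $\mathbb{X}$ embeds as a dense subspace. *)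

From mathcomp Require Import all_boot all_order.
From mathcomp Require Import all_classical all_reals all_analysis.
Set Implicit Arguments. Unset Strict Implicit. Unset Printing Implicit Defensive.
Local Open Scope classical_set_scope.

Section Order.
Variables (U : Type) (P : set U) (le : U -> U -> Prop).

Definition is_lub (A : set U) (s : U) : Prop :=
  P s /\ (forall a, A a -> le a s) /\
  (forall t, P t -> (forall a, A a -> le a t) -> le s t).

Definition is_glb (A : set U) (m : U) : Prop :=
  P m /\ (forall a, A a -> le m a) /\
  (forall t, P t -> (forall a, A a -> le t a) -> le t m).

Definition directed_in (D : set U) : Prop :=
  D `<=` P /\ (exists d, D d) /\
  (forall a b, D a -> D b -> exists c, D c /\ le a c /\ le b c).

Definition complete_lattice : Prop :=
  forall A, A `<=` P -> exists s, is_lub A s.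

Definition way_below (x y : U) : Prop :=
  forall D s, directed_in D -> is_lub D s -> le y s -> exists d, D d /\ le x d.

Definition continuous_lattice : Prop :=
  complete_lattice /\
  forall y, P y -> is_lub [set x | P x /\ way_below x y] y.

Definition completely_prime_filter (F : set U) : Prop :=
  F `<=` P /\ (exists x, F x) /\
  (forall x y, F x -> P y -> le x y -> F y) /\
  (forall x y m, F x -> F y -> is_glb [set x; y] m -> F m) /\
  (forall A s, A `<=` P -> is_lub A s -> F s -> exists a, A a /\ F a).
End Order.

Section Spaces.
Variable V : Type.

Definition is_topology (C : set V) (tau : set (set V)) : Prop :=
  (forall W, tau W -> W `<=` C) /\ tau set0 /\ tau C /\
  (forall W1 W2, tau W1 -> tau W2 -> tau (W1 `&` W2)) /\
  (forall F, F `<=` tau -> tau (\bigcup_(W in F) W)).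

Definition core_compact (tau : set (set V)) : Prop :=
  continuous_lattice tau (@subset V).
End Spaces.

Section Spectral.
Variable T : topologicalType.

Definition viable_base (Om : set (set T)) : Prop :=
  Om `<=` open /\
  (forall A B, Om A -> Om B -> Om (A `|` B)) /\
  (forall A B, Om A -> Om B -> Om (A `&` B)) /\
  Om set0 /\ Om setT /\
  (forall W, open W -> exists F, F `<=` Om /\ W = \bigcup_(B in F) B).

Definition is_ideal (Om : set (set T)) (I : set (set T)) : Prop :=
  I `<=` Om /\ (exists A, I A) /\
  (forall A B, I B -> Om A -> A `<=` B -> I A) /\
  (forall A B, I A -> I B -> exists C, I C /\ A `<=` C /\ B `<=` C).

Definition Xhat (Om : set (set T)) : set (set (set (set T))) :=
  completely_prime_filter (is_ideal Om) (@subset (set T)).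

Definition O_I (Om : set (set T)) (I : set (set T)) : set (set (set (set T))) :=
  [set y | Xhat Om y /\ y I].

Definition tau_hat (Om : set (set T)) : set (set (set (set (set T)))) :=
  [set W | exists I, is_ideal Om I /\ W = O_I Om I].

Definition iotaX (Om : set (set T)) (x : T) : set (set (set T)) :=
  [set I | is_ideal Om I /\ x \in \bigcup_(A in I) A].
End Spectral.

(* Points of the spectral space are completely prime filters of the ideal
   lattice Idl(Om); every prime filter G of the distributive lattice Om gives
   one, the set of ideals meeting G, and the prime ideal theorem (Zorn) yields
   enough prime filters to separate ideals: I ⊆ J as soon as O_I ⊆ O_J.
   Hence O_I = ⋃_{A ∈ I} O_{↓A}, and each O_{↓A} is way below O_I: if a
   directed family of opens O_{K_d} covers O_I but no K_d contains A, a prime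
   filter through A avoiding the directed union of the K_d gives an
   uncovered point of O_I.  The embedding x ↦ ι(x) is the point of the prime
   filter of basic neighbourhoods of x; T_0 makes it injective and the
   equality ι⁻¹(O_I) = ⋃ I makes it continuous, open onto its image and dense. *)
From mathcomp Require Import all_boot all_order.
From mathcomp Require Import all_classical all_reals all_analysis.
Set Implicit Arguments. Unset Strict Implicit. Unset Printing Implicit Defensive.
Local Open Scope classical_set_scope.

Section LatticeFacts.
Variables (U : Type) (P : set U) (le : U -> U -> Prop).

Lemma way_below_le x y :
  P y -> (forall z, le z z) -> way_below P le x y -> le x y.
Proof.
move=> Py le_refl wb_xy.
have dir : directed_in P le [set y].
  split; first by move=> _ ->.
  split; first by exists y.
  by move=> a b -> ->; exists y.
have lub : is_lub P le [set y] y by split=> //; split=> [a -> //|t _]; apply.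
by have [d [-> ]] := wb_xy _ _ dir lub (le_refl y).
Qed.

End LatticeFacts.

Section OpenSetLattice.
Variables (V : Type) (tau : set (set V)).
Hypothesis tau_bigcup : forall F, F `<=` tau -> tau (\bigcup_(W in F) W).

Lemma is_lub_bigcup F :
  F `<=` tau -> is_lub tau (@subset V) F (\bigcup_(W in F) W).
Proof.
move=> Ftau; split; first exact: tau_bigcup.
split; first by move=> a Fa x ax; exists a.
by move=> t _ ub x [a Fa ax]; exact: ub a Fa x ax.
Qed.

Lemma complete_lattice_open : complete_lattice tau (@subset V).
Proof. by move=> F Ftau; exists (\bigcup_(W in F) W); exact: is_lub_bigcup. Qed.

Lemma is_lub_sub_bigcup F s :
  F `<=` tau -> is_lub tau (@subset V) F s -> s `<=` \bigcup_(W in F) W.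
Proof.
by move=> Ftau [_ [_ least]]; apply: least; [exact: tau_bigcup|exact: (is_lub_bigcup Ftau).2.1].
Qed.

End OpenSetLattice.

Section SpectralCompactification.
Variables (T : topologicalType) (Om : set (set T)).
Hypothesis hO : viable_base Om.

Let Om_open : Om `<=` open := hO.1.
Let OmU A B : Om A -> Om B -> Om (A `|` B) := hO.2.1 A B.
Let OmI A B : Om A -> Om B -> Om (A `&` B) := hO.2.2.1 A B.
Let Om0 : Om set0 := hO.2.2.2.1.
Let OmT : Om setT := hO.2.2.2.2.1.
Let Om_base : forall W, open W -> exists F, F `<=` Om /\ W = \bigcup_(B in F) B :=
  hO.2.2.2.2.2.

Lemma ideal_set0 I : is_ideal Om I -> I set0.
Proof. by case=> _ [[A IA] [dc _]]; exact: dc _ _ IA Om0 (sub0set A). Qed.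

Lemma idealU I B C : is_ideal Om I -> I B -> I C -> I (B `|` C).
Proof.
case=> IOm [_ [dc dir]] IB IC.
have [D [ID [BD CD]]] := dir _ _ IB IC.
by apply: (dc _ _ ID (OmU (IOm _ IB) (IOm _ IC))) => x [/BD|/CD].
Qed.

Lemma is_ideal_of_setU I : I `<=` Om -> I set0 ->
  (forall A B, I B -> Om A -> A `<=` B -> I A) ->
  (forall B C, I B -> I C -> I (B `|` C)) -> is_ideal Om I.
Proof.
move=> IOm I0 dc IU; split=> //; split; first by exists set0.
split=> // A B IA IB; exists (A `|` B).
by split; [exact: IU|split; [exact: subsetUl|exact: subsetUr]].
Qed.

Lemma is_ideal_Om : is_ideal Om Om.
Proof. exact: is_ideal_of_setU. Qed.

Lemma is_idealI I J : is_ideal Om I -> is_ideal Om J -> is_ideal Om (I `&` J).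
Proof.
move=> hI hJ; apply: is_ideal_of_setU.
- by move=> B [/(hI.1)].
- by split; exact: ideal_set0.
- by move=> A B [IB JB] OA AB; split; [exact: hI.2.2.1 IB OA AB|exact: hJ.2.2.1 JB OA AB].
- by move=> B C [IB JB] [IC JC]; split; exact: idealU.
Qed.

Lemma is_glb_idealI I J : is_ideal Om I -> is_ideal Om J ->
  is_glb (is_ideal Om) (@subset (set T)) [set I; J] (I `&` J).
Proof.
move=> hI hJ; split; first exact: is_idealI.
split; first by move=> a [->|->]; [exact: subIsetl|exact: subIsetr].
by move=> t _ lb z tz; split; [apply: (lb I)|apply: (lb J)] => //; [left|right].
Qed.

Definition below (A : set T) := [set B | Om B /\ B `<=` A].

Lemma is_ideal_below A : is_ideal Om (below A).
Proof.
apply: is_ideal_of_setU; first by move=> B [].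
- by split.
- by move=> B C [_ CA] OB BC; split => //; apply: subset_trans CA.
- by move=> B C [OB BA] [OC CA]; split; [exact: OmU | move=> x [/BA|/CA]].
Qed.

Lemma below_sub I A : is_ideal Om I -> I A -> below A `<=` I.
Proof. by move=> hI IA B [OB BA]; exact: hI.2.2.1 IA OB BA. Qed.

Lemma is_lub_below I :
  is_ideal Om I -> is_lub (is_ideal Om) (@subset (set T)) (below @` I) I.
Proof.
move=> hI; split=> //; split; first by move=> _ [A IA <-]; exact: below_sub.
move=> t _ ub B IB.
by apply: (ub (below B)); [exists B | split => //; exact: hI.1].
Qed.

Definition ideal_sup (F : set (set (set T))) :=
  [set B | Om B /\ forall t, is_ideal Om t -> (forall a, F a -> a `<=` t) -> t B].

Lemma is_lub_ideal_sup F : F `<=` is_ideal Om ->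
  is_lub (is_ideal Om) (@subset (set T)) F (ideal_sup F).
Proof.
move=> Fideal.
have sup_ideal : is_ideal Om (ideal_sup F).
  apply: is_ideal_of_setU; first by move=> B [].
  - by split => // t ti _; exact: ideal_set0.
  - by move=> B C [OC ub] OB BC; split => // t ti H; exact: ti.2.2.1 (ub t ti H) OB BC.
  - move=> B C [OB ubB] [OC ubC]; split; first exact: OmU.
    by move=> t ti H; exact: idealU (ubB t ti H) (ubC t ti H).
split => //; split; last by move=> t ti H B [_ ub]; exact: ub t ti H.
move=> a Fa B aB; split; first exact: (Fideal a Fa).1 B aB.
by move=> t ti ub; exact: ub a Fa B aB.
Qed.

Lemma Xhat_up y I J : Xhat Om y -> y I -> is_ideal Om J -> I `<=` J -> y J.
Proof. by move=> Xy yI hJ IJ; exact: Xy.2.2.1 I J yI hJ IJ. Qed.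

Lemma Xhat_join y F s : Xhat Om y -> F `<=` is_ideal Om ->
  is_lub (is_ideal Om) (@subset (set T)) F s -> y s -> exists2 a, F a & y a.
Proof. by move=> Xy Fi lub ys; have [a []] := Xy.2.2.2.2 F s Fi lub ys; exists a. Qed.

Lemma Xhat_Om y : Xhat Om y -> y Om.
Proof.
move=> Xy; have [I yI] := Xy.2.1.
by apply: (Xhat_up Xy yI is_ideal_Om); exact: (Xy.1 I yI).1.
Qed.

Lemma Xhat_below0 y : Xhat Om y -> ~ y (below set0).
Proof.
move=> Xy y0.
have lub : is_lub (is_ideal Om) (@subset (set T)) set0 (below set0).
  split; first exact: is_ideal_below.
  split=> // t ti _ B [_]; rewrite subset0 => ->; exact: ideal_set0.
by have [a] := Xhat_join Xy (sub0set _) lub y0.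
Qed.

Definition prime_filter (G : set (set T)) :=
  G `<=` Om /\ G setT /\ ~ G set0 /\
  (forall B C, G B -> Om C -> B `<=` C -> G C) /\
  (forall B C, G B -> G C -> G (B `&` C)) /\
  (forall B C, Om B -> Om C -> G (B `|` C) -> G B \/ G C).

Definition filter_point (G : set (set T)) :=
  [set I | is_ideal Om I /\ exists B, I B /\ G B].

Lemma Xhat_filter_point G : prime_filter G -> Xhat Om (filter_point G).
Proof.
move=> [GOm [GT [G0 [Gup [GI GU]]]]].
split; first by move=> I [].
split; first by exists Om; split; [exact: is_ideal_Om | exists setT].
split.
  by move=> I J [_ [B [IB GB]]] hJ IJ; split=> //; exists B; split=> //; exact: IJ.
split.
  move=> I J m [hI [B [IB GB]]] [hJ [C [JC GC]]] [hm [_ greatest]].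
  split=> //; exists (B `&` C); split; last exact: GI.
  have OBC := OmI (GOm _ GB) (GOm _ GC).
  apply: (greatest (I `&` J) (is_idealI hI hJ) (is_glb_idealI hI hJ).2.1).
  by split; [exact: hI.2.2.1 IB OBC (@subIsetl _ _ _)|
             exact: hJ.2.2.1 JC OBC (@subIsetr _ _ _)].
move=> F s Fi [hs [_ least]] [_ [B [sB GB]]].
apply: contrapT => noF.
pose outside := [set B | Om B /\ ~ G B].
have outside_ideal : is_ideal Om outside.
  apply: is_ideal_of_setU; first by move=> C [].
  - by [].
  - by move=> C D [OD nGD] OC CD; split => // GC; apply: nGD; exact: Gup GC OD CD.
  - by move=> C D [OC nGC] [OD nGD]; split; [exact: OmU|case/GU].
have : s `<=` outside.
  apply: least => // a Fa C aC; split; first exact: (Fi a Fa).1 C aC.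
  by move=> GC; apply: noF; exists a; split => //; split; [exact: Fi|exists C].
by move=> /(_ B sB) [].
Qed.

(* Absorbing L rather than containing it keeps the empty chain admissible for
   Zorn; a maximal such family still contains L, and its complement is prime. *)
Definition avoiding_downset (L : set (set T)) (A : set T) (K : set (set T)) :=
  K `<=` Om /\ (forall B C, K B -> Om C -> C `<=` B -> K C) /\
  (forall B C, K B -> K C -> K (B `|` C)) /\ ~ K A /\
  (forall B C, K B -> L C -> K (B `|` C)).

Lemma avoiding_downset_maximal L A :
  exists K, avoiding_downset L A K /\ forall K', K `<` K' -> ~ avoiding_downset L A K'.
Proof.
apply: Zorn_bigcup => F FP Ftot; split.
  by move=> B [K FK KB]; exact: (FP K FK).1 B KB.
split.
  by move=> B C [K FK KB] OC CB; exists K => //; exact: (FP K FK).2.1 B C KB OC CB.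
split.
  move=> B C [K1 FK1 KB] [K2 FK2 KC].
  have [K12|K21] := Ftot _ _ FK1 FK2.
    by exists K2 => //; apply: (FP K2 FK2).2.2.1 => //; exact: K12.
  by exists K1 => //; apply: (FP K1 FK1).2.2.1 => //; exact: K21.
split; first by move=> [K FK KA]; exact: (FP K FK).2.2.2.1 KA.
by move=> B C [K FK KB] LC; exists K => //; exact: (FP K FK).2.2.2.2 B C KB LC.
Qed.

Section PrimeIdealTheorem.
Variables (L : set (set T)) (A : set T) (K : set (set T)).
Hypotheses (hL : is_ideal Om L) (OA : Om A) (nLA : ~ L A).
Hypotheses (hK : avoiding_downset L A K)
  (Kmax : forall K', K `<` K' -> ~ avoiding_downset L A K').

Lemma maximal_avoiding_downset_contains : L `<=` K.
Proof.
have [KOm [Kdc [KU [nKA KL]]]] := hK.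
have [k Kk] : exists k, K k.
  apply: contrapT => K0; apply: (@Kmax L).
    split; first by move=> B KB; exfalso; apply: K0; exists B.
    by move=> LK; have [B LB] := hL.2.1; apply: K0; exists B; exact: LK.
  split; first exact: hL.1.
  split; first by move=> B C LB OC CB; exact: hL.2.2.1 LB OC CB.
  by split; [|split=> //]; move=> B C LB LC; exact: idealU.
move=> C LC; apply: Kdc (KL _ _ Kk LC) (hL.1 _ LC) _; exact: subsetUr.
Qed.

(* Adjoining a new B to K would keep it avoiding A unless A ⊆ k ∪ B. *)
Lemma maximal_avoiding_downset_cover B :
  Om B -> ~ K B -> exists k, K k /\ A `<=` k `|` B.
Proof.
have [KOm [Kdc [KU [nKA KL]]]] := hK.
move=> OB nKB; apply: contrapT => nocover.
pose KB := [set D | Om D /\ exists k, K k /\ D `<=` k `|` B].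
apply: (@Kmax KB).
  split; first by move=> D KD; split; [exact: KOm|exists D; split => //; exact: subsetUl].
  move=> KBK; apply: nKB; apply: KBK; split => //.
  by exists set0; split; [exact: maximal_avoiding_downset_contains (ideal_set0 hL)|exact: subsetUr].
split; first by move=> D [].
split.
  by move=> D C [OD [k [Kk Dk]]] OC CD; split => //; exists k; split => //; exact: subset_trans Dk.
split.
  move=> D1 D2 [OD1 [k1 [Kk1 D1k]]] [OD2 [k2 [Kk2 D2k]]]; split; first exact: OmU.
  exists (k1 `|` k2); split; first exact: KU.
  by move=> x [/D1k [?|?]|/D2k [?|?]]; [left; left|right|left; right|right].
split; first by move=> [_ [k [Kk Ak]]]; apply: nocover; exists k.
move=> D C [OD [k [Kk Dk]]] LC; split; first exact: OmU OD (hL.1 _ LC).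
exists (k `|` C); split; first exact: KL.
by move=> x [/Dk [?|?]|?]; [left; left|right|left; right].
Qed.

Lemma prime_filter_maximal_avoiding_downset : prime_filter [set B | Om B /\ ~ K B].
Proof.
have [KOm [Kdc [KU [nKA KL]]]] := hK.
split; first by move=> B [].
split; first by split => // KT; apply: nKA; apply: Kdc KT OA (subsetT _).
split; first by case=> _; apply; exact: maximal_avoiding_downset_contains (ideal_set0 hL).
split; first by move=> B C [OB nKB] OC BC; split => // KC; apply: nKB; exact: Kdc KC OB BC.
split.
  move=> B C [OB nKB] [OC nKC]; split; first exact: OmI.
  move=> KBC.
  have [k1 [Kk1 Ak1]] := maximal_avoiding_downset_cover OB nKB.
  have [k2 [Kk2 Ak2]] := maximal_avoiding_downset_cover OC nKC.
  apply: nKA; apply: Kdc (KU _ _ (KU _ _ Kk1 Kk2) KBC) OA _.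
  move=> x Ax; have := Ak1 x Ax; have := Ak2 x Ax.
  by case=> [x2|xC] [x1|xB]; [left; right|left; right|left; left|right].
move=> B C OB OC [_ nKBC].
have [KB|] := pselect (K B); last by left.
have [KC|] := pselect (K C); last by right.
by exfalso; apply: nKBC; exact: KU.
Qed.

End PrimeIdealTheorem.

Lemma prime_filter_separation L A : is_ideal Om L -> Om A -> ~ L A ->
  exists G, prime_filter G /\ G A /\ forall B, L B -> ~ G B.
Proof.
move=> hL OA nLA; have [K [hK Kmax]] := avoiding_downset_maximal L A.
exists [set B | Om B /\ ~ K B]; split.
  exact: prime_filter_maximal_avoiding_downset hL OA nLA hK Kmax.
split; first by split => //; exact: hK.2.2.2.1.
by move=> B LB [_]; apply; apply: (maximal_avoiding_downset_contains hL nLA hK Kmax).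
Qed.

Lemma Xhat_separation L A : is_ideal Om L -> Om A -> ~ L A ->
  exists y, Xhat Om y /\ (forall K, is_ideal Om K -> K A -> y K) /\ ~ y L.
Proof.
move=> hL OA nLA; have [G [pG [GA nG]]] := prime_filter_separation hL OA nLA.
exists (filter_point G); split; first exact: Xhat_filter_point.
split; first by move=> K hK KA; split => //; exists A.
by move=> [_ [B [LB GB]]]; exact: nG LB GB.
Qed.

Lemma O_I_subset I J : is_ideal Om I -> is_ideal Om J ->
  O_I Om I `<=` O_I Om J -> I `<=` J.
Proof.
move=> hI hJ IJ B IB; apply: contrapT => nJB.
have [y [Xy [yI nyJ]]] := Xhat_separation hJ (hI.1 _ IB) nJB.
by have [_ yJ] := IJ y (conj Xy (yI I hI IB)); exact: nyJ.
Qed.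

Lemma O_I_below_sub I A : is_ideal Om I -> I A -> O_I Om (below A) `<=` O_I Om I.
Proof. by move=> hI IA y [Xy yA]; split => //; exact: Xhat_up Xy yA hI (below_sub hI IA). Qed.

Lemma O_II I J : is_ideal Om I -> is_ideal Om J ->
  O_I Om I `&` O_I Om J = O_I Om (I `&` J).
Proof.
move=> hI hJ; apply/seteqP; split.
  move=> y [[Xy yI] [_ yJ]]; split => //.
  exact: Xy.2.2.2.1 I J _ yI yJ (is_glb_idealI hI hJ).
move=> y [Xy yIJ].
by split; split => //; [exact: Xhat_up Xy yIJ hI (@subIsetl _ _ _)|
                         exact: Xhat_up Xy yIJ hJ (@subIsetr _ _ _)].
Qed.

Lemma tau_hat_bigcup F : F `<=` tau_hat Om -> tau_hat Om (\bigcup_(W in F) W).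
Proof.
move=> Ft.
pose G := [set I | is_ideal Om I /\ F (O_I Om I)].
have Gi : G `<=` is_ideal Om by move=> I [].
have lub := is_lub_ideal_sup Gi.
exists (ideal_sup G); split; first exact: lub.1.
apply/seteqP; split.
  move=> y [W FW Wy]; have [I [hI WI]] := Ft W FW.
  rewrite WI in Wy FW; case: Wy => Xy yI; split => //.
  by apply: (Xhat_up Xy yI lub.1); apply: lub.2.1; split.
move=> y [Xy ys]; have [a [_ Fa] ya] := Xhat_join Xy Gi lub ys.
by exists (O_I Om a) => //; split.
Qed.

Lemma tau_hat_topology : is_topology (Xhat Om) (tau_hat Om).
Proof.
split; first by move=> W [I [_ ->]] y [].
split.
  exists (below set0); split; first exact: is_ideal_below.
  by apply/seteqP; split => // y [Xy]; exact: Xhat_below0.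
split.
  exists Om; split; first exact: is_ideal_Om.
  by apply/seteqP; split => [y Xy|y []//]; split => //; exact: Xhat_Om.
split; last exact: tau_hat_bigcup.
move=> _ _ [I [hI ->]] [J [hJ ->]].
by exists (I `&` J); split; [exact: is_idealI|exact: O_II].
Qed.

Lemma way_below_O_I_below I A : is_ideal Om I -> I A ->
  way_below (tau_hat Om) (@subset _) (O_I Om (below A)) (O_I Om I).
Proof.
move=> hI IA D s [Dt [[d0 Dd0] Ddir]] slub Is.
have OA := hI.1 _ IA.
pose J := [set B | exists K, is_ideal Om K /\ D (O_I Om K) /\ K B].
have hJ : is_ideal Om J.
  apply: is_ideal_of_setU.
  - by move=> B [K [hK [_ KB]]]; exact: hK.1.
  - have [K0 [hK0 e]] := Dt d0 Dd0.
    by exists K0; split => //; split; [rewrite -e|exact: ideal_set0].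
  - move=> B C [K [hK [DK KC]]] OB BC; exists K; split => //; split => //.
    exact: hK.2.2.1 KC OB BC.
  - move=> B C [K1 [hK1 [D1 B1]]] [K2 [hK2 [D2 C2]]].
    have [c [Dc [s1 s2]]] := Ddir _ _ D1 D2.
    have [K3 [hK3 ec]] := Dt c Dc.
    rewrite ec in Dc s1 s2; exists K3; split => //; split => //.
    exact: idealU hK3 (O_I_subset hK1 hK3 s1 B1) (O_I_subset hK2 hK3 s2 C2).
have [[K [hK [DK KA]]]|nJA] := pselect (J A).
  by exists (O_I Om K); split => //; exact: O_I_below_sub.
have [y [Xy [yK nyJ]]] := Xhat_separation hJ OA nJA.
have yI : O_I Om I y.
  by apply: O_I_below_sub hI IA _ _; split => //; apply: yK; [exact: is_ideal_below|split].
have [d Dd yd] := is_lub_sub_bigcup tau_hat_bigcup Dt slub (Is y yI).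
have [K [hK dK]] := Dt d Dd.
rewrite dK in yd Dd; case: yd => _ yK'.
by exfalso; apply/nyJ/(Xhat_up Xy yK' hJ) => B KB; exists K.
Qed.

Lemma tau_hat_core_compact : core_compact (tau_hat Om).
Proof.
split; first exact: complete_lattice_open tau_hat_bigcup.
move=> _ [I [hI ->]].
split; first by exists I.
split; first by move=> V [_ wbV]; apply: way_below_le wbV; [exists I|exact: subset_refl].
move=> t _ ub y [Xy yI].
have belowI : below @` I `<=` is_ideal Om by move=> _ [A _ <-]; exact: is_ideal_below.
have [_ [A IA <-] yA] := Xhat_join Xy belowI (is_lub_below hI) yI.
apply: (ub (O_I Om (below A))); last by split.
split; last exact: way_below_O_I_below.
by exists (below A); split => //; exact: is_ideal_below.
Qed.

Lemma iotaXE x : iotaX Om x = filter_point [set B | Om B /\ B x].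
Proof.
apply/seteqP; split => I [hI H]; split => //.
  by case: (set_mem H) => B IB Bx; exists B; split => //; split => //; exact: hI.1.
by case: H => B [IB [_ Bx]]; apply: mem_set; exists B.
Qed.

Lemma Xhat_iotaX x : Xhat Om (iotaX Om x).
Proof.
rewrite iotaXE; apply: Xhat_filter_point.
split; first by move=> B [].
split; first by [].
split; first by case.
split; first by move=> B C [_ Bx] OC BC; split => //; exact: BC.
split; first by move=> B C [OB Bx] [OC Cx]; split; [exact: OmI|].
by move=> B C OB OC [_ [Bx|Cx]]; [left|right].
Qed.

Lemma iotaX_preimage_O_I I : is_ideal Om I ->
  iotaX Om @^-1` O_I Om I = \bigcup_(B in I) B.
Proof.
move=> hI; apply/seteqP; split; first by move=> x [_ [_ /set_mem]].
by move=> x Ix; split; [exact: Xhat_iotaX|split => //; exact: mem_set].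
Qed.

Lemma open_iotaX_preimage W : tau_hat Om W -> open (iotaX Om @^-1` W).
Proof.
move=> [I [hI ->]]; rewrite iotaX_preimage_O_I //.
by apply: bigcup_open => B IB; apply: Om_open; exact: hI.1.
Qed.

Lemma iotaX_separates x y A : nbhs x A -> ~ A y -> iotaX Om x <> iotaX Om y.
Proof.
rewrite nbhsE => -[W [oW Wx] WA] nAy e.
have [F [FOm WF]] := Om_base oW.
rewrite WF in Wx WA; case: Wx => B FB Bx.
have OB := FOm B FB.
have : iotaX Om x (below B).
  by split; [exact: is_ideal_below|apply: mem_set; exists B; [split|]].
rewrite e => -[_ /set_mem [C [_ CB] Cy]].
by apply: nAy; apply: WA; exists B => //; exact: CB.
Qed.

Lemma iotaX_inj : kolmogorov_space T -> injective (iotaX Om).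
Proof.
move=> kT x y e; apply: contrapT => /eqP nxy.
have [A [[/set_mem Ax /set_mem yA]|[/set_mem Ay /set_mem xA]]] := kT x y nxy.
  exact: iotaX_separates Ax yA e.
exact: iotaX_separates Ay xA (esym e).
Qed.

Lemma iotaX_image_open W : open W ->
  iotaX Om @` W = O_I Om (below W) `&` range (iotaX Om).
Proof.
move=> oW; apply/seteqP; split.
  move=> _ [x Wx <-]; split; last by exists x.
  split; first exact: Xhat_iotaX.
  split; first exact: is_ideal_below.
  apply: mem_set.
  have [F [FOm WF]] := Om_base oW.
  have := Wx; rewrite {1}WF => -[B FB Bx].
  exists B => //; split; first exact: FOm.
  by rewrite WF => z Bz; exists B.
move=> y [[_ yW] [x _ exy]]; subst y.
by case: yW => _ /set_mem [B [_ BW] Bx]; exists x => //; exact: BW.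
Qed.

Lemma iotaX_dense W : tau_hat Om W -> W !=set0 -> exists x, W (iotaX Om x).
Proof.
move=> [I [hI ->]] [y [Xy yI]].
have [[B [IB [x Bx]]]|nB] := pselect (exists B, I B /\ exists x, B x).
  by exists x; split; [exact: Xhat_iotaX|split => //; apply: mem_set; exists B].
exfalso; apply: (Xhat_below0 Xy); apply: (Xhat_up Xy yI (is_ideal_below set0)).
move=> B IB; split; first exact: hI.1.
by move=> z Bz; apply: nB; exists B; split => //; exists z.
Qed.

End SpectralCompactification.

Theorem mainTheorem15 (T : topologicalType) (Om : set (set T)) :
  kolmogorov_space T -> viable_base Om ->
  is_topology (Xhat Om) (tau_hat Om) /\
      core_compact (tau_hat Om) /\
      (forall x, Xhat Om (iotaX Om x)) /\
      (forall W, tau_hat Om W -> open (iotaX Om @^-1` W)) /\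
      injective (iotaX Om) /\
      (forall U, open U -> exists W, tau_hat Om W /\ iotaX Om @` U = W `&` range (iotaX Om)) /\
      (forall W, tau_hat Om W -> W !=set0 -> exists x, W (iotaX Om x)).
Proof.
move=> kT hO; split; first exact: tau_hat_topology hO.
split; first exact: tau_hat_core_compact hO.
split; first exact: Xhat_iotaX hO.
split; first exact: open_iotaX_preimage hO.
split; first exact: iotaX_inj hO kT.
split; last exact: iotaX_dense hO.
move=> W oW; exists (O_I Om (below Om W)); rewrite (iotaX_image_open hO oW).
by split => //; exists (below Om W); split => //; apply: is_ideal_below hO W.
Qed.
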